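(* For $0\le i\le n$, $dp(i,i)$ is the largest pair in $DP_i$, and its second component equals $\pi_i$. For $1\le i\le n$, $dp(i,i)$ is the smallest pair (in lexicographic order) greater than $dp(i-1,i-1)$ among integer pairs whose second component equals $\pi_i$.
   Context: Let $x_0\le x_1\le\cdots\le x_{n+1}$ be real numbers, $\{x\}=x-\lfloor x\rfloor$, and let $\pi=(\pi_0,\dots,\pi_{n+1})$ be the permutation of $\{0,\dots,n+1\}$ such that for $0\le i<j\le n+1$, $\pi_i>\pi_j$ iff $(\{x_i\},-x_i,i)<(\{x_j\},-x_j,j)$ lexicographically. For a sequence of indices $s_0<\cdots<s_k$, a drop is a consecutive pair $(s_{h-1},s_h)$ with $\pi_{s_{h-1}}>\pi_{s_h}$. For $0\le h\le i\le n$, $dp(h,i)$ is the pair $(d(h,i),p(h,i))$, where $d(h,i)$ is the minimum number of drops over all sequences of $h+1$ indices $0=s_0<s_1<\cdots<s_h\le i$, and $p(h,i)$ is the minimum of $\pi_{s_h}$ over all such sequences having exactly $d(h,i)$ drops. Let $DP_i=\{dp(h,i)\mid 0\le h\le i\}$. Pairs are compared lexicographically. *)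

From HB Require Import structures.
From mathcomp Require Import all_boot all_order all_algebra.
From mathcomp Require Import reals.
Set Implicit Arguments. Unset Strict Implicit. Unset Printing Implicit Defensive.
Import Order.TTheory GRing.Theory Num.Theory.
Local Open Scope ring_scope.

Definition frac {R : realType} (x : R) : R := x - (Num.floor x)%:~R.

Definition lexlt3 {R : realType} (a b : R * R * nat) : bool :=
  (a.1.1 < b.1.1) ||
  ((a.1.1 == b.1.1) && ((a.1.2 < b.1.2) || ((a.1.2 == b.1.2) && (a.2 < b.2)%N))).

Definition key {R : realType} (x : nat -> R) (i : nat) : R * R * nat :=
  (frac (x i), - x i, i).

Definition admissible (i h : nat) (s : seq nat) : bool :=
  [&& size s == h.+1, nth 0%N s 0 == 0%N, sorted ltn s & all (fun k => k <= i)%N s].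

Definition drops (pi : nat -> nat) (s : seq nat) : nat :=
  count (fun pq : nat * nat => (pi pq.2 < pi pq.1)%N) (zip s (behead s)).

Definition is_d (pi : nat -> nat) (h i d : nat) : Prop :=
  (exists s, admissible i h s /\ drops pi s = d) /\
  (forall s, admissible i h s -> (d <= drops pi s)%N).

Definition is_p (pi : nat -> nat) (h i d p : nat) : Prop :=
  (exists s, [/\ admissible i h s, drops pi s = d & pi (nth 0%N s h) = p]) /\
  (forall s, admissible i h s -> drops pi s = d -> (p <= pi (nth 0%N s h))%N).

Definition is_dp (pi : nat -> nat) (h i : nat) (dp : nat * nat) : Prop :=
  is_d pi h i dp.1 /\ is_p pi h i dp.1 dp.2.

Definition lexle2 (a b : nat * nat) : bool :=
  (a.1 < b.1)%N || ((a.1 == b.1) && (a.2 <= b.2)%N).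
Definition lexltZ (a b : int * int) : bool :=
  (a.1 < b.1) || ((a.1 == b.1) && (a.2 < b.2)).
Definition lexleZ (a b : int * int) : bool :=
  (a.1 < b.1) || ((a.1 == b.1) && (a.2 <= b.2)).
Definition pairZ (a : nat * nat) : int * int := (a.1%:Z, a.2%:Z).

(* On the diagonal h = i the only admissible sequence is 0, 1, ..., i, so
   dp(i,i) = (D_i, pi_i), where D_i counts the descents of pi_0, ..., pi_i.
   For h <= i the sequence 0, ..., h gives d(h,i) <= D_h <= D_i, and equality
   throughout forces pi to have no descent between h and i, whence
   p(h,i) <= pi_h <= pi_i. Finally D_i = D_(i-1) + [pi_i < pi_(i-1)], which is
   exactly the lexicographic successor of (D_(i-1), pi_(i-1)) with second
   component pi_i. *)
From mathcomp Require Import all_boot all_order all_algebra.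
From mathcomp Require Import reals zify.

Set Implicit Arguments.
Unset Strict Implicit.

Definition descent (pi : nat -> nat) : pred nat := fun j => pi j.+1 < pi j.

Definition descents (pi : nat -> nat) (k : nat) : nat :=
  count (descent pi) (iota 0 k).

Lemma descentsD pi h k :
  descents pi (h + k) = descents pi h + count (descent pi) (iota h k).
Proof. by rewrite /descents iotaD count_cat. Qed.

Lemma descentsS pi k : descents pi k.+1 = descents pi k + descent pi k.
Proof. by rewrite -addn1 descentsD /= addn0. Qed.

Lemma le_no_descent pi h k :
  ~~ has (descent pi) (iota h k) -> pi h <= pi (h + k).
Proof.
elim: k h => [|k IHk] h; first by rewrite addn0.
rewrite /= negb_or -leqNgt -addSnnS => /andP[le_h /IHk]; exact: leq_trans.
Qed.

Lemma zip_iota_behead m k :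
  zip (iota m k.+1) (behead (iota m k.+1)) = [seq (j, j.+1) | j <- iota m k].
Proof. by elim: k m => [|k IHk] m //=; rewrite -IHk. Qed.

Lemma drops_iota pi k : drops pi (iota 0 k.+1) = descents pi k.
Proof. by rewrite /drops zip_iota_behead count_map. Qed.

Lemma admissible_iota h i : h <= i -> admissible i h (iota 0 h.+1).
Proof.
move=> le_hi; rewrite /admissible size_iota eqxx iota_ltn_sorted /=.
by apply/allP => k; rewrite mem_iota ltnS => /andP[_ /leq_trans]; apply.
Qed.

Lemma admissible_diag i s : admissible i i s -> s = iota 0 i.+1.
Proof.
case/and4P => /eqP size_s _ sorted_s /allP le_s_i.
have sub_s : {subset s <= iota 0 i.+1}.
  by move=> k /le_s_i; rewrite mem_iota ltnS.
have uniq_s := sorted_uniq ltn_trans ltnn sorted_s.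
have le_size : size (iota 0 i.+1) <= size s by rewrite size_iota size_s.
have [_ eq_s] := uniq_min_size uniq_s sub_s le_size.
exact: (irr_sorted_eq ltn_trans ltnn sorted_s (iota_ltn_sorted _ _) eq_s).
Qed.

Lemma is_dp_diag pi i : is_dp pi i i (descents pi i, pi i).
Proof.
have adm := admissible_iota (leqnn i).
split; split.
- by exists (iota 0 i.+1); rewrite adm drops_iota.
- by move=> s /admissible_diag ->; rewrite drops_iota.
- by exists (iota 0 i.+1); rewrite adm drops_iota nth_iota.
- by move=> s /admissible_diag ->; rewrite nth_iota.
Qed.

Lemma is_dp_diag_eq pi i dp : is_dp pi i i dp -> dp = (descents pi i, pi i).
Proof.
case: dp => d p [[[s [adm_s /= <-]] _] [[t [adm_t _ /= <-]] _]].
by rewrite (admissible_diag adm_s) (admissible_diag adm_t) drops_iota nth_iota.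
Qed.

Lemma is_dp_le_diag pi h i dp :
  h <= i -> is_dp pi h i dp -> lexle2 dp (descents pi i, pi i).
Proof.
case: dp => d p le_hi [[_ min_d] [_ min_p]].
have adm := admissible_iota le_hi.
have le_d : d <= descents pi h by rewrite -drops_iota; exact: min_d.
have := descentsD pi h (i - h); rewrite subnKC // => D_i.
rewrite /lexle2 /=; case: ltngtP => //= eq_d; first lia.
have no_desc : ~~ has (descent pi) (iota h (i - h)) by rewrite has_count; lia.
have le_p : p <= pi (nth 0 (iota 0 h.+1) h).
  by apply: min_p; rewrite // drops_iota /=; lia.
rewrite nth_iota // add0n in le_p.
by apply: leq_trans le_p _; rewrite -(subnKC le_hi); exact: le_no_descent.
Qed.

Lemma lexltZ_successor (d p q : nat) : p != q ->
  let b := pairZ (d + (q < p), q) in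
  lexltZ (pairZ (d, p)) b /\
  forall c : int * int, c.2 = q -> lexltZ (pairZ (d, p)) c -> lexleZ b c.
Proof.
rewrite /pairZ /lexltZ /lexleZ /= => ne_pq.
by split=> [|[c1 c2] /= ->]; case: ltnP; lia.
Qed.

Local Open Scope ring_scope.

Theorem lemma8 (R : realType) (n : nat) (x : nat -> R) (pi : nat -> nat)
  (x_sorted : forall i, (i <= n)%N -> x i <= x i.+1)
  (pi_range : forall i, (i < n.+2)%N -> (pi i < n.+2)%N)
  (pi_inj : {in [pred i | (i < n.+2)%N] &, injective pi})
  (pi_def : forall i j, (i < j)%N -> (j <= n.+1)%N ->
     (pi j < pi i)%N = lexlt3 (key x i) (key x j)) :
  (forall i, (i <= n)%N ->
     exists dpi, [/\ is_dp pi i i dpi, dpi.2 = pi i &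
       forall h dph, (h <= i)%N -> is_dp pi h i dph -> lexle2 dph dpi]) /\
  (forall i, (1 <= i <= n)%N -> forall a b,
     is_dp pi i.-1 i.-1 a -> is_dp pi i i b ->
     [/\ (pairZ b).2 = (pi i)%:Z, lexltZ (pairZ a) (pairZ b) &
       forall c : int * int, c.2 = (pi i)%:Z -> lexltZ (pairZ a) c ->
         lexleZ (pairZ b) c]).
Proof.
split=> [i _ | [//|i] /andP[_ le_in] a b dp_a dp_b].
  exists (descents pi i, pi i); split=> //; first exact: is_dp_diag.
  by move=> h dp; apply: is_dp_le_diag.
rewrite (is_dp_diag_eq dp_a) (is_dp_diag_eq dp_b) descentsS.
have ne_pi : pi i != pi i.+1.
  by apply/eqP => /pi_inj; rewrite !inE; lia.
by have [? ?] := lexltZ_successor (descents pi i) ne_pi.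
Qed.
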